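(* Let $1\to K\to G\xrightarrow{p} Q\to 1$ be an exact sequence of groups (so $p:G\to Q$ is a surjection with kernel $K$), and assume every non-trivial element of $K$ is a generalized torsion element of $G$. Then a non-trivial element $g\in G$ is a generalized torsion element of $G$ if and only if either $p(g)=1$ or $p(g)$ is a generalized torsion element of $Q$.
   Context: For $g,x$ in a group, $g^{x}:=xgx^{-1}$. A non-trivial element $g$ of a group $G$ is a generalized torsion element (of $G$) if there exist a positive integer $n$ and $x_1,\ldots,x_n\in G$ with $g^{x_1}g^{x_2}\cdots g^{x_n}=1$. *)

From HB Require Import structures.
From mathcomp Require Import all_boot.
From mathcomp Require Import monoid.

Set Implicit Arguments.
Unset Strict Implicit.
Unset Printing Implicit Defensive.

Local Open Scope group_scope.

(* Paper's conjugation convention: g^x := x g x^-1. *)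
Definition pconj (G : groupType) (g x : G) : G := x * g * x^-1.

Definition conj_prod (G : groupType) (g : G) (s : seq G) : G :=
  foldr (fun x acc => pconj g x * acc) 1 s.

Definition gen_torsion (G : groupType) (g : G) : Prop :=
  g <> 1 /\ exists s : seq G, 0 < size s /\ conj_prod g s = 1.

(* The image under p of a product of conjugates of g is a product of conjugates
   of p g, which gives the direct implication.  Conversely, lift a relation
   (p g)^{q_1} ... (p g)^{q_n} = 1 to G: the product k of the corresponding
   conjugates of g lies in K, so either k = 1 or k is generalized torsion; and
   a product of conjugates of k is again a product of conjugates of g. *)
From HB Require Import structures.
From mathcomp Require Import all_boot.
From mathcomp Require Import monoid.

Local Open Scope group_scope.

Section ConjProd.
Context {G : groupType}.
Implicit Types (g y : G) (s t : seq G).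

Lemma conj_prod_cat g s t :
  conj_prod g (s ++ t) = conj_prod g s * conj_prod g t.
Proof. by elim: s => [|x s IHs] /=; rewrite ?mul1g // IHs mulgA. Qed.

Lemma pconj_conj_prod g s y :
  pconj (conj_prod g s) y = conj_prod g (map ( *%g y) s).
Proof.
elim: s => [|x s IHs] /=; rewrite /pconj; first by rewrite mulg1 mulgV.
by rewrite -IHs /pconj invgM !mulgA mulgVK.
Qed.

Lemma conj_prod_conj_prod g s t :
  conj_prod (conj_prod g s) t =
  conj_prod g (flatten [seq map ( *%g y) s | y <- t]).
Proof. by elim: t => [|y t IHt] //=; rewrite conj_prod_cat IHt pconj_conj_prod. Qed.

Lemma gen_torsion_conj_prod g s :
  g <> 1 -> 0 < size s -> conj_prod g s = 1 \/ gen_torsion (conj_prod g s) ->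
  gen_torsion g.
Proof.
move=> g_neq1 s_gt0 [gs1 | [_ [t [t_gt0 gst1]]]]; split=> //; first by exists s.
exists (flatten [seq map ( *%g y) s | y <- t]).
split; last by rewrite -conj_prod_conj_prod.
case: t t_gt0 {gst1} => [|y t] //= _.
by rewrite size_cat size_map (leq_trans s_gt0) ?leq_addr.
Qed.

End ConjProd.

Section Morphism.
Context {G Q : groupType} {p : G -> Q}.
Hypothesis p_mul : {morph p : x y / x * y}.

Lemma mulg_morph1 : p 1 = 1.
Proof. by apply: (@mulgI _ (p 1)); rewrite -p_mul !mulg1. Qed.

Lemma mulg_morphV x : p x^-1 = (p x)^-1.
Proof. by apply/esym/mulg1_eq; rewrite -p_mul mulgV mulg_morph1. Qed.

Lemma mulg_morph_conj_prod g s :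
  p (conj_prod g s) = conj_prod (p g) (map p s).
Proof.
elim: s => [|x s IHs] /=; first exact: mulg_morph1.
by rewrite p_mul IHs /pconj !p_mul mulg_morphV.
Qed.

Lemma gen_torsion_morph g : gen_torsion g -> p g <> 1 -> gen_torsion (p g).
Proof.
move=> [_ [s [s_gt0 gs1]]] pg_neq1; split=> //.
by exists (map p s); rewrite size_map -mulg_morph_conj_prod gs1 mulg_morph1.
Qed.

End Morphism.

Lemma map_surj {T U : Type} {f : T -> U} :
  (forall u, exists t, f t = u) -> forall su, exists st, map f st = su.
Proof.
move=> f_surj; elim=> [|u su [st <-]]; first by exists [::].
by have [t <-] := f_surj u; exists (t :: st).
Qed.

Theorem theorem1p4 (G Q : groupType) (p : G -> Q)
  (p_mul : {morph p : x y / x * y})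
  (p_surj : forall q : Q, exists g : G, p g = q)
  (hK : forall k : G, p k = 1 -> k <> 1 -> gen_torsion k) :
  forall g : G, g <> 1 -> (gen_torsion g <-> (p g = 1 \/ gen_torsion (p g))).
Proof.
move=> g g_neq1; split=> [g_tor | [pg1 | [_ [sq [sq_gt0 pg_sq1]]]]].
- have [pg1 | /eqP pg_neq1] := eqVneq (p g) 1; first by left.
  by right; apply: gen_torsion_morph.
- exact: hK.
- have [s def_sq] := map_surj p_surj sq; subst sq.
  rewrite size_map in sq_gt0.
  apply: (gen_torsion_conj_prod _ _ g_neq1 sq_gt0).
  have [gs1 | /eqP gs_neq1] := eqVneq (conj_prod g s) 1; first by left.
  by right; apply: hK gs_neq1; rewrite mulg_morph_conj_prod.
Qed.
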